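(* In the setting of the context (problem, KKT point $x^*$ satisfying LICQ, strict complementarity and strong second-order sufficiency, unique multiplier $\lambda^*$, $w^*=(x^*,\lambda^* )$), for all $\mu\in\mathbb{R}$ and $r\in\mathbb{R}^{n+m}$ independently sufficiently small there exists a function $w^{w^*,\mu,r}\colon\mathbb{R}\to\mathbb{R}^{n+m}$, $(d-1)$ times continuously differentiable on a neighborhood of $\rho\in[0,\|r\|]$, such that locally $$F^\mu\bigl(w^{w^*,\mu,r}(\rho)\bigr)=\rho\,\mathrm{nml}(r)\quad\text{and}\quad w^{w^*,\mu,r}(0)=w^{w^*}(\mu).$$
   Context: Problem: minimize $f(x)$ subject to $c_{\mathcal I}(x)\ge0$, $c_{\mathcal E}(x)=0$, with $f,c_i\colon\mathbb{R}^n\to\mathbb{R}$, $c=(c_{\mathcal I}^T,c_{\mathcal E}^T)^T\in\mathbb{R}^m$, and $d\ge3$ the smallest number of times each of $f,c_1,\dots,c_m$ is continuously differentiable. Notation: $g=\nabla f$, $A$ the Jacobian of $c$, $H(x,\lambda)$ the Hessian in $x$ of $f(x)-\lambda^Tc(x)$, $[v]_S$ components of $v$ indexed by $S$, uppercase = diagonal matrix of the lowercase vector, $e$ the all-ones vector, $w=(x,\lambda)$. $F^\mu(x,\lambda)=\bigl(g(x)-A(x)^T\lambda;\ C_{\mathcal I}(x)[\lambda]_{\mathcal I}-\mu e;\ c_{\mathcal E}(x)\bigr)$. Assumptions at $x^*$ with active set $\mathcal A(x^* )=\{i: c_i(x^* )=0\}$: LICQ (active constraint gradients linearly independent); strict complementarity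 (there is $\lambda^*$ with $g(x^* )=A(x^* )^T\lambda^*$, $C_{\mathcal I}(x^* )[\lambda^*]_{\mathcal I}=0$, $[\lambda^*]_{\mathcal I}\ge0$, $[\lambda^*]_i>0$ for $i\in\mathcal I\cap\mathcal A(x^* )$); strong second-order sufficiency (some $\omega>0$ with $p^TH(x^*,\lambda^* )p\ge\omega\|p\|^2$ whenever $\nabla c_i(x^* )^Tp=0$ for all $i\in\mathcal A(x^* )$). Let $w^{w^*,0}$ be the locally unique function, $(d-1)$ times continuously differentiable near $0$, with $F^0(w^{w^*,0}(r))=r$ locally and $w^{w^*,0}(0)=w^*$ (it exists by the implicit function theorem under these assumptions). The barrier trajectory is $w^{w^*}(\mu)=w^{w^*,0}\bigl((0,\mu e^T,0)^T\bigr)$, with blocks of sizes $n,m_{\mathcal I},m_{\mathcal E}$. For $r\in\mathbb{R}^{n+m}$, $\mathrm{nml}(r)=r/\|r\|$ if $r\neq0$ and $\mathrm{nml}(0)=0$. *)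

From HB Require Import structures.
From mathcomp Require Import all_boot all_order all_algebra.
From mathcomp Require Import all_classical all_reals all_analysis.
Set Implicit Arguments. Unset Strict Implicit. Unset Printing Implicit Defensive.
Import Order.TTheory GRing.Theory Num.Theory.
Import numFieldNormedType.Exports.
Local Open Scope classical_set_scope.
Local Open Scope ring_scope.

Fixpoint Ck {R : realType} {V W : normedModType R} (k : nat) (U : set V)
  (f : V -> W) {struct k} : Prop :=
  match k with
  | 0 => forall x, U x -> {for x, continuous f}
  | k'.+1 => (forall x, U x -> differentiable f x) /\
             (forall v : V, Ck k' U (fun x => 'D_v f x))
  end.

Definition enorm {R : realType} {k : nat} (r : 'rV[R]_k) : R :=
  Num.sqrt (\sum_(i < k) r 0 i ^+ 2).

Definition nml {R : realType} {k : nat} (r : 'rV[R]_k) : 'rV[R]_k :=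
  if r == 0 then 0 else (enorm r)^-1 *: r.

Definition ev {R : realType} {n : nat} (j : 'I_n) : 'rV[R]_n := delta_mx 0 j.

Definition grad {R : realType} {n : nat} (f : 'rV[R]_n -> R) (x : 'rV[R]_n)
  : 'rV[R]_n := \row_j 'D_(ev j) f x.

Definition jac {R : realType} {n m : nat} (c : 'rV[R]_n -> 'rV[R]_m)
  (x : 'rV[R]_n) : 'M[R]_(m, n) :=
  \matrix_(i, j) 'D_(ev j) (fun y => c y 0 i) x.

Definition hessL {R : realType} {n m : nat} (f : 'rV[R]_n -> R)
  (c : 'rV[R]_n -> 'rV[R]_m) (x : 'rV[R]_n) (lam : 'rV[R]_m) : 'M[R]_n :=
  let L := fun y => f y - (lam *m (c y)^T) 0 0 in
  \matrix_(j, k) 'D_(ev j) (fun y => 'D_(ev k) L y) x.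

(* F^mu(x, lambda), with w = (x, lambda) in R^(n + (mI + mE)),
   c = (c_I, c_E) with c_I of size mI and c_E of size mE. *)
Definition Fmu {R : realType} {n mI mE : nat} (f : 'rV[R]_n -> R)
  (c : 'rV[R]_n -> 'rV[R]_(mI + mE)) (mu : R) (w : 'rV[R]_(n + (mI + mE)))
  : 'rV[R]_(n + (mI + mE)) :=
  let x := lsubmx w in
  let lam := rsubmx w in
  row_mx (grad f x - lam *m jac c x)
         (row_mx (\row_i (lsubmx (c x) 0 i * lsubmx lam 0 i - mu))
                 (rsubmx (c x))).

Definition bar_pt {R : realType} {n mI mE : nat} (mu : R)
  : 'rV[R]_(n + (mI + mE)) :=
  row_mx 0 (row_mx (const_mx mu) 0).

(* The barrier system is a constant shift of the unperturbed one:
   F^mu(w) = F^0(w) - (0, mu e, 0).  Hence w(rho) := w^{w*,0}((0, mu e, 0) + rho nml(r))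
   solves F^mu(w(rho)) = rho nml(r) wherever the argument lies in the domain U of
   w^{w*,0}, and it starts on the barrier trajectory.  Composing a C^(d-1) map with
   an affine line keeps it C^(d-1), and since |nml(r)| <= 1 the whole segment
   rho in [0, |r|] stays in a ball around 0 inside U once |mu| and |r| are small.
   LICQ, strict complementarity and second-order sufficiency are what make
   w^{w*,0} exist; here that existence is a hypothesis, so they are not used again. *)

From HB Require Import structures.
From mathcomp Require Import all_boot all_order all_algebra.
From mathcomp Require Import all_classical all_reals all_analysis.
From mathcomp Require Import lra.
Import Order.TTheory GRing.Theory Num.Theory.
Import numFieldNormedType.Exports.
Local Open Scope classical_set_scope.
Local Open Scope ring_scope.

Section AffineLine.
Variables (R : realType) (V W : normedModType R) (a v : V).

Let line (t : R^o) : V := a + t *: v.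

Lemma differentiable_line (t : R^o) : differentiable line t.
Proof. by apply: differentiableD; [exact: differentiable_cst | exact: differentiableZl]. Qed.

Lemma derive_comp_line (g : V -> W) (h t : R^o) :
  'D_h (g \o line) t = 'D_(h *: v) g (line t).
Proof.
rewrite /derive; congr lim; f_equal.
apply: funext => s /=; congr (_ *: (g _ - _)).
by rewrite /line scalerDl scalerA addrCA.
Qed.

Lemma Ck_comp_line k (U : set V) (g : V -> W) :
  Ck k U g -> Ck (V := R^o) k (line @^-1` U) (g \o line).
Proof.
elim: k g => [|k IH] g /=.
  move=> g_cont t Ut; apply: continuous_comp; last exact: g_cont.
  exact/differentiable_continuous/differentiable_line.
move=> [g_diff g_D]; split.
  by move=> t Ut; apply: differentiable_comp; [exact: differentiable_line | exact: g_diff].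
move=> h; rewrite (_ : (fun t => _) = ('D_(h *: v) g) \o line).
  exact: IH.
by apply: funext => t; rewrite derive_comp_line.
Qed.

End AffineLine.

Lemma mx_norm_le_entries (R : realType) k (r : 'rV[R]_k) (b : R) :
  0 <= b -> (forall j, `|r 0 j| <= b) -> `|r| <= b.
Proof.
move=> b_ge0 rb; rewrite [`|r|]mx_normrE; apply: bigmax_le => // [[i j]] _ /=.
by rewrite (ord1 i).
Qed.

Lemma entry_le_enorm (R : realType) k (r : 'rV[R]_k) j : `|r 0 j| <= enorm r.
Proof.
have sqr_sum_ge0 (P : pred 'I_k) : 0 <= \sum_(i | P i) r 0 i ^+ 2.
  by apply: sumr_ge0 => i _; exact: sqr_ge0.
rewrite /enorm -sqrtr_sqr ler_sqrt // (bigD1 j) //= lerDl.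
exact: sqr_sum_ge0.
Qed.

Lemma norm_nml_le1 (R : realType) k (r : 'rV[R]_k) : `|nml r| <= 1.
Proof.
apply: mx_norm_le_entries => // j; rewrite /nml.
case: eqP => _; first by rewrite mxE normr0.
have enorm_ge0 : 0 <= enorm r by exact: sqrtr_ge0.
rewrite mxE normrM normfV (ger0_norm enorm_ge0).
have [->|enorm_neq0] := eqVneq (enorm r) 0; first by rewrite invr0 mul0r.
by rewrite mulrC ler_pdivrMr ?mul1r ?entry_le_enorm // lt_def enorm_neq0.
Qed.

Lemma norm_bar_pt_le (R : realType) n mI mE (mu : R) :
  `|@bar_pt R n mI mE mu| <= `|mu|.
Proof.
apply: mx_norm_le_entries => // j; rewrite /bar_pt.
case: (split_ordP j) => k ->; first by rewrite row_mxEl mxE normr0.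
rewrite row_mxEr; case: (split_ordP k) => k' ->; first by rewrite row_mxEl mxE.
by rewrite row_mxEr mxE normr0.
Qed.

Lemma Fmu_bar_ptE (R : realType) n mI mE (f : 'rV[R]_n -> R)
  (c : 'rV[R]_n -> 'rV[R]_(mI + mE)) mu w :
  Fmu f c mu w = Fmu f c 0 w - bar_pt mu.
Proof.
rewrite /Fmu /bar_pt !opp_row_mx !add_row_mx !oppr0 !addr0.
by congr (row_mx _ (row_mx _ _)); apply/rowP => i; rewrite !mxE addr0.
Qed.

Theorem corollary1 (R : realType) (n mI mE d : nat)
  (f : 'rV[R]_n -> R) (c : 'rV[R]_n -> 'rV[R]_(mI + mE))
  (hd : (3 <= d)%N)
  (hf : Ck d setT f)
  (hc : forall i : 'I_(mI + mE), Ck d setT (fun x => c x 0 i))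
  (xs : 'rV[R]_n) (ls : 'rV[R]_(mI + mE))
  (* x* is feasible *)
  (hfeasI : forall i : 'I_mI, 0 <= lsubmx (c xs) 0 i)
  (hfeasE : rsubmx (c xs) = 0)
  (* KKT conditions for (xs, ls) *)
  (hstat : grad f xs = ls *m jac c xs)
  (hcompl : forall i : 'I_mI, lsubmx (c xs) 0 i * lsubmx ls 0 i = 0)
  (hdual : forall i : 'I_mI, 0 <= lsubmx ls 0 i)
  (* strict complementarity *)
  (hstrict : forall i : 'I_mI, lsubmx (c xs) 0 i = 0 -> 0 < lsubmx ls 0 i)
  (* LICQ: the gradients of the active constraints are linearly independent *)
  (hlicq : forall y : 'rV[R]_(mI + mE),
      (forall i, c xs 0 i != 0 -> y 0 i = 0) -> y *m jac c xs = 0 -> y = 0)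
  (* strong second-order sufficiency *)
  (hsosc : exists2 om : R, 0 < om &
      forall p : 'rV[R]_n,
        (forall i, c xs 0 i = 0 -> (jac c xs *m p^T) i 0 = 0) ->
        om * enorm p ^+ 2 <= (p *m hessL f c xs ls *m p^T) 0 0)
  (* W0 = w^{ws,0}: the locally unique C^(d-1) local solution of F^0(w) = r
     with W0(0) = ws = (xs, ls); barrier trajectory is W0 (bar_pt mu) *)
  (W0 : 'rV[R]_(n + (mI + mE)) -> 'rV[R]_(n + (mI + mE)))
  (hW0 : exists (U V : set 'rV[R]_(n + (mI + mE))),
      open U /\ U 0 /\ open V /\ V (row_mx xs ls) /\
      Ck d.-1 U W0 /\
      (forall r, U r -> Fmu f c 0 (W0 r) = r) /\
      W0 0 = row_mx xs ls /\
      (forall r w, U r -> V w -> Fmu f c 0 w = r -> w = W0 r)) :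
  exists2 eps : R, 0 < eps &
    forall (mu : R) (r : 'rV[R]_(n + (mI + mE))),
      `|mu| < eps -> enorm r < eps ->
      exists (w : R -> 'rV[R]_(n + (mI + mE))) (N : set R),
        open N /\
        (forall rho : R, 0 <= rho <= enorm r -> N rho) /\
        Ck (V := R^o) d.-1 N w /\
        (forall rho, N rho -> Fmu f c mu (w rho) = rho *: nml r) /\
        w 0 = W0 (bar_pt mu).
Proof.
have [U [_ [oU [U0 [_ [_ [W0_Ck [F0_W0 _]]]]]]]] := hW0.
have /nbhs_ballP [e e_gt0 ballU] : nbhs (0 : 'rV[R]_(n + (mI + mE))) U.
  exact: open_nbhs_nbhs.
exists (e / 2) => [|mu r mu_small r_small]; first by rewrite divr_gt0.
pose line (t : R^o) := bar_pt mu + t *: nml r.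
exists (W0 \o line), (line @^-1` U); split.
  apply: open_comp => // t _.
  exact/differentiable_continuous/differentiable_line.
split.
  move=> rho /andP [rho_ge0 rho_le]; apply: ballU.
  rewrite -ball_normE /= sub0r normrN.
  have line_le : `|line rho| <= `|mu| + rho.
    rewrite (le_trans (ler_normD _ _)) // lerD ?norm_bar_pt_le // normrZ.
    by rewrite ger0_norm // -[leRHS]mulr1 ler_wpM2l ?norm_nml_le1.
  apply: le_lt_trans line_le _.
  have : rho < e / 2 by exact: le_lt_trans r_small.
  by move: mu_small; lra.
split; first exact: Ck_comp_line.
split; last by rewrite /= /line scale0r addr0.
by move=> rho U_line; rewrite /= Fmu_bar_ptE F0_W0 // /line addrC addKr.
Qed.
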